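(* Let $T=(L,R,\tau,\sigma)$ be a rewrite rule and $m:L\to G$ a matching with respect to $T$. Let $(\mathcal{H},\tau_1,\delta)$ be a pushout of $\tau:|L|\to|R|$ and $|m|:|L|\to|G|$ in the category of sets, with $\tau_1:|G|\to\mathcal{H}$, $\delta:|R|\to\mathcal{H}$, $\delta\circ\tau=\tau_1\circ|m|$. Let $\Gamma=|G|-|m(L)|$, $\Sigma=\mathrm{dom}(\sigma)$, $\Delta=|R|-\Sigma$. Then $\mathcal{H}$ is the disjoint union $\mathcal{H}=\tau_1(\Gamma)+\delta(\Delta)+\delta(\Sigma)$, where the restriction $\tau_1:\Gamma\to\tau_1(\Gamma)$ is bijective, the restriction $\delta:\Delta\to\delta(\Delta)$ is bijective, and for distinct nodes $n,n'\in\Sigma$ with $\delta(n)=\delta(n')$ one has $\sigma(n)=\sigma(n')$. In addition, there is a unique partial function $\sigma_1:\mathcal{H}\rightharpoonup|G|$ with domain $\delta(\Sigma)$ such that $|m|\circ\sigma=\sigma_1\circ\delta$ on $\Sigma$.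
   Context: A signature $\Omega$ assigns an arity to each symbol; for a function $f$, $f^*$ acts letterwise on strings. A termgraph (graph) $G$ has node set $|G|$, a subset of labeled nodes, a labeling $\mathcal{L}_G$ of labeled nodes by symbols of $\Omega$ and a successor function $\mathcal{S}_G$ giving each labeled node a string of nodes of length the arity of its label. A graph morphism $g:G\to H$ is a function $|G|\to|H|$ sending labeled nodes to labeled nodes with $\mathcal{L}_H(g(n))=\mathcal{L}_G(n)$ and $\mathcal{S}_H(g(n))=g^*(\mathcal{S}_G(n))$ for each labeled $n$; $|g|$ denotes its underlying function. For graphs $G,H$ and a function $\tau:|G|\to|H|$, a node $p\in|H|$ is a $\tau$-clone of $q\in|G|$ if $p$ is labeled iff $q$ is labeled, and then $\mathcal{L}_H(p)=\mathcal{L}_G(q)$ and $\mathcal{S}_H(p)=\tau^*(\mathcal{S}_G(q))$. A rewrite rule is a tuple $(L,R,\tau,\sigma)$ with $L,R$ graphs, $\tau:|L|\to|R|$ a function, and $\sigma:|R|\rightharpoonup|L|$ a partial function such that each $n\in\mathrm{dom}(\sigma)$ is unlabeled or is a $\tau$-clone of $\sigma(n)$. A matching with respect to $T=(L,R,\tau,\sigma)$ is a graph morphism $m:L\to G$ such that whenever $m(p)=m(p')$ for distinct nodes $p,p'$ of $L$, then $\tau(p),\tau(p')\in\mathrm{dom}(\sigma)$ and $\sigma(\tau(p))=\sigma(\tau(p'))$. *)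

From Stdlib Require Import List.
Import ListNotations.
Set Implicit Arguments.

Record signature := Signature { sym : Type; arity : sym -> nat }.

(* The successor list is only meaningful on labeled nodes (values on
   unlabeled nodes are ignored by every definition below). *)
Record graph (S : signature) := Graph {
  node : Type;
  lab : node -> option (sym S);
  succ : node -> list node;
  succ_arity : forall n s, lab n = Some s -> length (succ n) = arity S s
}.
Arguments node {S} g.
Arguments lab {S} g _.
Arguments succ {S} g _.

Definition is_morphism (S : signature) (G H : graph S) (g : node G -> node H) : Prop :=
  forall n s, lab G n = Some s ->
    lab H (g n) = Some s /\ succ H (g n) = map g (succ G n).

Definition is_clone (S : signature) (G H : graph S) (tau : node G -> node H)
  (p : node H) (q : node G) : Prop :=
  (lab H p = None <-> lab G q = None) /\
  (forall s, lab G q = Some s ->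
     lab H p = Some s /\ succ H p = map tau (succ G q)).

Record rule (S : signature) := Rule {
  rL : graph S;
  rR : graph S;
  rtau : node rL -> node rR;
  rsigma : node rR -> option (node rL);
  rule_ax : forall n q, rsigma n = Some q ->
    lab rR n = None \/ is_clone rL rR rtau n q
}.

Definition is_matching (S : signature) (T : rule S) (G : graph S)
  (m : node (rL T) -> node G) : Prop :=
  is_morphism (rL T) G m /\
  forall p p', p <> p' -> m p = m p' ->
    exists q, rsigma T (rtau T p) = Some q /\ rsigma T (rtau T p') = Some q.

Definition is_pushout (A B C P : Type) (f : A -> B) (g : A -> C)
  (i1 : C -> P) (i2 : B -> P) : Prop :=
  (forall a, i2 (f a) = i1 (g a)) /\
  (forall (X : Type) (u : C -> X) (v : B -> X),
     (forall a, v (f a) = u (g a)) ->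
     exists h : P -> X,
       (forall c, h (i1 c) = u c) /\ (forall b, h (i2 b) = v b) /\
       (forall h' : P -> X, (forall c, h' (i1 c) = u c) ->
          (forall b, h' (i2 b) = v b) -> forall x, h' x = h x)).

(* In the category of sets the pushout H is G + R modulo the equivalence
   generated by m p ~ tau p.  A matching identifies two nodes of L only when
   sigma identifies their tau-images, so the gluing never merges a node of
   Gamma or of Delta with anything else, and merges nodes of Sigma only
   within fibres of sigma.  Each of these facts is witnessed by a map out of
   the pushout: a classifier H -> |G| + (|R| + |L|) sending tau1 x to x on
   Gamma and delta n to n on Delta and to sigma n on Sigma, and the partial
   map sigma1 induced by m o sigma. *)
From Stdlib Require Import List.
From Stdlib Require Import Classical ClassicalEpsilon PropExtensionality.
Set Implicit Arguments.

Lemma extend_along (A C X : Type) (g : A -> C) (w : A -> X) (d : C -> X) :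
  (forall a a', g a = g a' -> w a = w a') ->
  exists u : C -> X,
    (forall a, u (g a) = w a) /\ (forall c, ~ (exists a, g a = c) -> u c = d c).
Proof.
  intros Hw.
  exists (fun c => match excluded_middle_informative (exists a, g a = c) with
     | left e => w (proj1_sig (constructive_indefinite_description _ e))
     | right _ => d c end).
  split.
  - intros a. destruct (excluded_middle_informative _) as [e | e].
    + destruct (constructive_indefinite_description _ e) as [a' Ha']; simpl.
      now apply Hw.
    + exfalso; apply e; eauto.
  - intros c Hc. destruct (excluded_middle_informative _); tauto.
Qed.

Lemma option_fun_eq_on_domain (X Y : Type) (D : X -> Prop) (f g : X -> option Y) :
  (forall x, f x <> None <-> D x) -> (forall x, g x <> None <-> D x) ->
  (forall x, D x -> f x = g x) -> forall x, f x = g x.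
Proof.
  intros Hf Hg Hfg x.
  destruct (classic (D x)) as [Dx | NDx]; [now apply Hfg|].
  destruct (f x) eqn:Ef; [exfalso; apply NDx, Hf; congruence|].
  destruct (g x) eqn:Eg; [exfalso; apply NDx, Hg; congruence|].
  reflexivity.
Qed.

Section Pushout.

Variables (A B C P : Type) (f : A -> B) (g : A -> C) (i1 : C -> P) (i2 : B -> P).
Hypothesis Hpo : is_pushout f g i1 i2.

Lemma pushout_jointly_surjective (p : P) :
  (exists c, i1 c = p) \/ (exists b, i2 b = p).
Proof.
  destruct Hpo as [_ Huniv].
  destruct (Huniv Prop (fun _ => True) (fun _ => True) (fun _ => eq_refl))
    as [h0 [_ [_ Hunique]]].
  (* Both the constant [True] and "p is in the image" factor the same cocone. *)
  assert (Htrue := Hunique (fun _ => True) (fun _ => eq_refl) (fun _ => eq_refl) p).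
  assert (Himage : ((exists c, i1 c = p) \/ (exists b, i2 b = p)) = h0 p).
  { apply (Hunique (fun p => (exists c, i1 c = p) \/ (exists b, i2 b = p)));
      intros; apply propositional_extensionality; split; eauto. }
  rewrite Himage, <- Htrue; exact I.
Qed.

Lemma pushout_induced_map (X : Type) (v : B -> X) (d : C -> X) :
  (forall a a', g a = g a' -> v (f a) = v (f a')) ->
  exists h : P -> X,
    (forall b, h (i2 b) = v b) /\
    (forall c, ~ (exists a, g a = c) -> h (i1 c) = d c).
Proof.
  intros Hv.
  destruct (extend_along g (fun a => v (f a)) d Hv) as [u [Hug Hud]].
  destruct Hpo as [_ Huniv].
  destruct (Huniv X u v (fun a => eq_sym (Hug a))) as [h [Hh1 [Hh2 _]]].
  exists h; split; [exact Hh2|].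
  intros c Hc; rewrite Hh1; now apply Hud.
Qed.

End Pushout.

Section Proposition1.

Variables (S : signature) (T : rule S) (G : graph S) (m : node (rL T) -> node G).
Hypothesis Hm : is_matching T G m.
Variables (H : Type) (tau1 : node G -> H) (delta : node (rR T) -> H).
Hypothesis Hpo : is_pushout (rtau T) m tau1 delta.

Definition Gamma (x : node G) : Prop := ~ exists p, m p = x.
Definition Sigma (n : node (rR T)) : Prop := rsigma T n <> None.
Definition Delta (n : node (rR T)) : Prop := rsigma T n = None.

Lemma matching_respects_sigma_classes (X : Type) (v : node (rR T) -> X) :
  (forall n n' q, rsigma T n = Some q -> rsigma T n' = Some q -> v n = v n') ->
  forall p p', m p = m p' -> v (rtau T p) = v (rtau T p').
Proof.
  intros Hv p p' Hpp'.
  destruct (classic (p = p')) as [<- | Np]; [reflexivity|].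
  destruct Hm as [_ Hglue].
  destruct (Hglue p p' Np Hpp') as [q [Hq Hq']].
  eauto.
Qed.

Lemma Sigma_or_Delta (n : node (rR T)) : Sigma n \/ Delta n.
Proof. unfold Sigma, Delta; destruct (rsigma T n); [left | right]; congruence. Qed.

Lemma pushout_cover (h : H) :
  (exists x, Gamma x /\ tau1 x = h) \/
  (exists n, Delta n /\ delta n = h) \/
  (exists n, Sigma n /\ delta n = h).
Proof.
  assert (Hdelta : forall n, (exists n', Delta n' /\ delta n' = delta n) \/
                             (exists n', Sigma n' /\ delta n' = delta n)).
  { intros n; destruct (Sigma_or_Delta n); [right | left]; eauto. }
  destruct (pushout_jointly_surjective Hpo h) as [[x <-] | [n <-]]; [|right; apply Hdelta].
  destruct (classic (Gamma x)) as [Gx | NGx]; [left; eauto|].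
  apply NNPP in NGx; destruct NGx as [p <-].
  right; rewrite <- (proj1 Hpo); apply Hdelta.
Qed.

Definition sigma_or_self (n : node (rR T)) : node (rR T) + node (rL T) :=
  match rsigma T n with Some q => inr q | None => inl n end.

Lemma pushout_classifier :
  exists c : H -> node G + (node (rR T) + node (rL T)),
    (forall x, Gamma x -> c (tau1 x) = inl x) /\
    (forall n, Delta n -> c (delta n) = inr (inl n)) /\
    (forall n, Sigma n -> exists q, rsigma T n = Some q /\ c (delta n) = inr (inr q)).
Proof.
  destruct (pushout_induced_map Hpo (fun n => inr (sigma_or_self n)) (@inl _ _))
    as [c [Hdelta Hgamma]].
  { apply (matching_respects_sigma_classes (fun n => inr (sigma_or_self n))).
    intros n n' q Hq Hq'; unfold sigma_or_self; now rewrite Hq, Hq'. }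
  exists c; split; [exact Hgamma | split].
  - intros n Dn; rewrite Hdelta; unfold sigma_or_self; now rewrite Dn.
  - intros n Sn; rewrite Hdelta; unfold sigma_or_self, Sigma in *.
    destruct (rsigma T n); [eauto | contradiction].
Qed.

Lemma sigma1_exists :
  exists sigma1 : H -> option (node G),
    (forall h, sigma1 h <> None <-> exists n, Sigma n /\ delta n = h) /\
    (forall n, sigma1 (delta n) = option_map m (rsigma T n)).
Proof.
  destruct (pushout_induced_map Hpo (fun n => option_map m (rsigma T n)) (fun _ => None))
    as [s1 [Hdelta Hgamma]].
  { apply (matching_respects_sigma_classes (fun n => option_map m (rsigma T n))).
    intros n n' q Hq Hq'; now rewrite Hq, Hq'. }
  exists s1; split; [|exact Hdelta].
  intros h; split.
  - intros Hdef.
    destruct (pushout_cover h) as [[x [Gx <-]] | [[n [Dn <-]] | HSigma]]; [| |exact HSigma];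
      exfalso; apply Hdef.
    + now apply Hgamma.
    + now rewrite Hdelta, Dn.
  - intros [n [Sn <-]]; rewrite Hdelta; unfold Sigma in Sn.
    destruct (rsigma T n); [discriminate | contradiction].
Qed.

End Proposition1.

Theorem proposition1 (S : signature) (T : rule S) (G : graph S)
  (m : node (rL T) -> node G) (Hm : is_matching T G m)
  (H : Type) (tau1 : node G -> H) (delta : node (rR T) -> H)
  (Hpo : is_pushout (rtau T) m tau1 delta) :
  let Gamma := fun x : node G => ~ exists p, m p = x in
  let Sigma := fun n : node (rR T) => rsigma T n <> None in
  let Delta := fun n : node (rR T) => rsigma T n = None in
  (* H is the disjoint union tau1(Gamma) + delta(Delta) + delta(Sigma) *)
  (forall h : H,
     (exists x, Gamma x /\ tau1 x = h) \/
     (exists n, Delta n /\ delta n = h) \/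
     (exists n, Sigma n /\ delta n = h)) /\
  (forall x n, Gamma x -> Delta n -> tau1 x <> delta n) /\
  (forall x n, Gamma x -> Sigma n -> tau1 x <> delta n) /\
  (forall n n', Delta n -> Sigma n' -> delta n <> delta n') /\
  (* tau1 restricted to Gamma is injective (hence bijective onto its image) *)
  (forall x x', Gamma x -> Gamma x' -> tau1 x = tau1 x' -> x = x') /\
  (* delta restricted to Delta is injective *)
  (forall n n', Delta n -> Delta n' -> delta n = delta n' -> n = n') /\
  (forall n n', Sigma n -> Sigma n' -> n <> n' -> delta n = delta n' ->
     rsigma T n = rsigma T n') /\
  (* unique partial sigma1 : H -> |G| with domain delta(Sigma), m o sigma = sigma1 o delta on Sigma *)
  (exists sigma1 : H -> option (node G),
     ((forall h, sigma1 h <> None <-> exists n, Sigma n /\ delta n = h) /\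
      (forall n, Sigma n -> sigma1 (delta n) = option_map m (rsigma T n))) /\
     (forall sigma1' : H -> option (node G),
        (forall h, sigma1' h <> None <-> exists n, Sigma n /\ delta n = h) ->
        (forall n, Sigma n -> sigma1' (delta n) = option_map m (rsigma T n)) ->
        forall h, sigma1' h = sigma1 h)).
Proof.
  intros GammaP SigmaP DeltaP.
  destruct (pushout_classifier Hm Hpo) as [c [cG [cD cS]]].
  split; [exact (pushout_cover T G Hpo) |].
  split; [intros x n Gx Dn E; generalize (cG x Gx) (cD n Dn); congruence |].
  split; [intros x n Gx Sn E; specialize (cG x Gx); destruct (cS n Sn) as [q [_ Hq]];
          congruence |].
  split; [intros n n' Dn Sn' E; specialize (cD n Dn); destruct (cS n' Sn') as [q [_ Hq]];
          congruence |].
  split; [intros x x' Gx Gx' E; generalize (cG x Gx) (cG x' Gx'); congruence |].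
  split; [intros n n' Dn Dn' E; generalize (cD n Dn) (cD n' Dn'); congruence |].
  split; [intros n n' Sn Sn' _ E; destruct (cS n Sn) as [q [Hq cq]];
          destruct (cS n' Sn') as [q' [Hq' cq']]; congruence |].
  destruct (sigma1_exists Hm Hpo) as [s1 [Hdom Hdelta]].
  exists s1; split; [split; [exact Hdom | intros n _; apply Hdelta] |].
  intros s1' Hdom' Hdelta'.
  apply (option_fun_eq_on_domain _ _ _ Hdom' Hdom).
  intros h [n [Sn <-]]; now rewrite Hdelta', Hdelta.
Qed.
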